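(* Let $F:\mathbf{Sets}\to\mathbf{Sets}$ be a functor that preserves pullbacks along injective morphisms. Let $\mathbf{Coalg}_F$ be the category of $F$-coalgebras and let $\mathcal{M}_F$ be the class of all $F$-homomorphisms $f:(A,\alpha_A)\to(B,\alpha_B)$ whose underlying function $f:A\to B$ is injective. Then $(\mathbf{Coalg}_F,\mathcal{M}_F)$ is an $\mathcal{M}$-adhesive category.
   Context: An $F$-coalgebra is a pair $(M,\alpha_M)$ with $M$ a set and $\alpha_M:M\to F(M)$ a function; an $F$-homomorphism $f:(M,\alpha_M)\to(N,\alpha_N)$ is a function $f:M\to N$ with $F(f)\circ\alpha_M=\alpha_N\circ f$. These form the category $\mathbf{Coalg}_F$. A functor $F:\mathbf{Sets}\to\mathbf{Sets}$ preserves pullbacks along injective morphisms if for every pullback square $A\to B$, $A\to C$, $f:B\to D$, $g:C\to D$ in $\mathbf{Sets}$ in which $f$ or $g$ is injective, the image square under $F$ is a pullback in $\mathbf{Sets}$. A pair $(\mathbf{C},\mathcal{M})$ with $\mathcal{M}$ a class of monomorphisms is an $\mathcal{M}$-adhesive category if: $\mathcal{M}$ contains all identities and is closed under composition; pushouts and pullbacks along $\mathcal{M}$-morphisms exist and $\mathcal{M}$ is stable under pushouts and pullbacks; and pushouts along $\mathcal{M}$-morphisms are vertical weak van Kampen squares, i.e. for every commutative cube whose bottom face is a pushout of $f:A\to C$ and $m:A\to B$ with $m\in\mathcal{M}$, whose back faces are pullbacks, and whose vertical morphisms all lie in $\mathcal{M}$, the top face is a pushout if and only if the front faces are pullbacks.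 *)

From Stdlib Require Import ProofIrrelevance FunctionalExtensionality.

Record Category : Type := {
  Obj : Type;
  Hom : Obj -> Obj -> Type;
  idm : forall A, Hom A A;
  comp : forall A B C, Hom B C -> Hom A B -> Hom A C;
  comp_assoc : forall A B C D (h : Hom C D) (g : Hom B C) (f : Hom A B),
      comp _ _ _ h (comp _ _ _ g f) = comp _ _ _ (comp _ _ _ h g) f;
  comp_id_l : forall A B (f : Hom A B), comp _ _ _ (idm B) f = f;
  comp_id_r : forall A B (f : Hom A B), comp _ _ _ f (idm A) = f
}.
Arguments Hom C A B : rename.
Arguments idm C A : rename.
Arguments comp C {A B D} g f : rename.

Definition is_mono (C : Category) {A B : Obj C} (m : Hom C A B) : Prop :=
  forall (Z : Obj C) (g h : Hom C Z A), comp C m g = comp C m h -> g = h.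

Definition is_pullback (C : Category) {P B Cc D : Obj C}
  (p : Hom C P B) (q : Hom C P Cc) (f : Hom C B D) (g : Hom C Cc D) : Prop :=
  comp C f p = comp C g q /\
  forall (X : Obj C) (x : Hom C X B) (y : Hom C X Cc),
    comp C f x = comp C g y ->
    exists! u : Hom C X P, comp C p u = x /\ comp C q u = y.

Definition is_pushout (C : Category) {A B Cc D : Obj C}
  (m : Hom C A B) (f : Hom C A Cc) (g : Hom C B D) (n : Hom C Cc D) : Prop :=
  comp C g m = comp C n f /\
  forall (X : Obj C) (x : Hom C B X) (y : Hom C Cc X),
    comp C x m = comp C y f ->
    exists! u : Hom C D X, comp C u g = x /\ comp C u n = y.

Record M_adhesive (C : Category) (M : forall A B : Obj C, Hom C A B -> Prop)
  : Prop := {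
  M_mono : forall A B (m : Hom C A B), M A B m -> is_mono C m;
  M_id : forall A, M A A (idm C A);
  M_comp : forall A B D (g : Hom C B D) (f : Hom C A B),
      M A B f -> M B D g -> M A D (comp C g f);
  M_pushout_exists : forall A B Cc (m : Hom C A B) (f : Hom C A Cc),
      M A B m ->
      exists (D : Obj C) (g : Hom C B D) (n : Hom C Cc D), is_pushout C m f g n;
  M_pullback_exists : forall B Cc D (f : Hom C B D) (g : Hom C Cc D),
      M B D f \/ M Cc D g ->
      exists (P : Obj C) (p : Hom C P B) (q : Hom C P Cc), is_pullback C p q f g;
  M_pushout_stable : forall A B Cc D (m : Hom C A B) (f : Hom C A Cc)
      (g : Hom C B D) (n : Hom C Cc D),
      is_pushout C m f g n -> M A B m -> M Cc D n;
  M_pullback_stable : forall P B Cc D (p : Hom C P B) (q : Hom C P Cc)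
      (f : Hom C B D) (g : Hom C Cc D),
      is_pullback C p q f g -> M B D f -> M P Cc q;
  M_vertical_weak_VK :
    forall (A B Cc D A' B' C' D' : Obj C)
      (m : Hom C A B) (f : Hom C A Cc) (g : Hom C B D) (n : Hom C Cc D)
      (m' : Hom C A' B') (f' : Hom C A' C') (g' : Hom C B' D') (n' : Hom C C' D')
      (a : Hom C A' A) (b : Hom C B' B) (c : Hom C C' Cc) (d : Hom C D' D),
      is_pushout C m f g n -> M A B m ->
      comp C g' m' = comp C n' f' ->
      comp C m a = comp C b m' -> comp C f a = comp C c f' ->
      comp C g b = comp C d g' -> comp C n c = comp C d n' ->
      is_pullback C m' a b m -> is_pullback C f' a c f ->
      M A' A a -> M B' B b -> M C' Cc c -> M D' D d ->
      (is_pushout C m' f' g' n' <->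
         (is_pullback C g' b d g /\ is_pullback C n' c d n))
}.

Record Functor (C D : Category) : Type := {
  Fobj : Obj C -> Obj D;
  Fmap : forall A B, Hom C A B -> Hom D (Fobj A) (Fobj B);
  Fmap_id : forall A, Fmap A A (idm C A) = idm D (Fobj A);
  Fmap_comp : forall A B E (g : Hom C B E) (f : Hom C A B),
      Fmap A E (comp C g f) = comp D (Fmap B E g) (Fmap A B f)
}.
Arguments Fobj {C D} F A : rename.
Arguments Fmap {C D} F {A B} f : rename.

Definition SetsCat : Category :=
  {| Obj := Type;
     Hom := fun A B => A -> B;
     idm := fun A (x : A) => x;
     comp := fun A B C (g : B -> C) (f : A -> B) (x : A) => g (f x);
     comp_assoc := fun _ _ _ _ _ _ _ => eq_refl;
     comp_id_l := fun _ _ _ => eq_refl;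
     comp_id_r := fun _ _ _ => eq_refl |}.

Definition injective {A B : Type} (f : A -> B) : Prop :=
  forall x y, f x = f y -> x = y.

Definition preserves_pullbacks_along_injective (F : Functor SetsCat SetsCat)
  : Prop :=
  forall (P B Cc D : Obj SetsCat) (p : Hom SetsCat P B) (q : Hom SetsCat P Cc)
    (f : Hom SetsCat B D) (g : Hom SetsCat Cc D),
    is_pullback SetsCat p q f g ->
    (injective f \/ injective g) ->
    is_pullback SetsCat (Fmap F p) (Fmap F q) (Fmap F f) (Fmap F g).

Section Coalg.
Variable F : Functor SetsCat SetsCat.

Record coalg : Type := {
  carrier : Obj SetsCat;
  str : Hom SetsCat carrier (Fobj F carrier)
}.

Definition is_coalg_hom (M N : coalg) (f : Hom SetsCat (carrier M) (carrier N))
  : Prop :=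
  comp SetsCat (Fmap F f) (str M) = comp SetsCat (str N) f.

Definition coalg_hom (M N : coalg) : Type :=
  { f : Hom SetsCat (carrier M) (carrier N) | is_coalg_hom M N f }.

Lemma coalg_hom_eq (M N : coalg) (f g : coalg_hom M N) :
  proj1_sig f = proj1_sig g -> f = g.
Proof.
  destruct f as [f hf], g as [g hg]; simpl; intros ->.
  f_equal; apply proof_irrelevance.
Qed.

Lemma coalg_id_hom (M : coalg) : is_coalg_hom M M (idm SetsCat (carrier M)).
Proof. unfold is_coalg_hom. rewrite Fmap_id. reflexivity. Qed.

Lemma coalg_comp_hom (M N K : coalg) (g : coalg_hom N K) (f : coalg_hom M N) :
  is_coalg_hom M K (comp SetsCat (proj1_sig g) (proj1_sig f)).
Proof.
  destruct f as [f hf], g as [g hg]; unfold is_coalg_hom in *; cbv beta iota delta [proj1_sig].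
  rewrite Fmap_comp.
  apply functional_extensionality; intro x.
  pose proof (f_equal (fun h => h x) hf) as hfx.
  pose proof (f_equal (fun h => h (f x)) hg) as hgx.
  simpl in *. rewrite hfx. exact hgx.
Qed.

Definition coalg_idm (M : coalg) : coalg_hom M M :=
  exist _ _ (coalg_id_hom M).

Definition coalg_comp (M N K : coalg) (g : coalg_hom N K) (f : coalg_hom M N)
  : coalg_hom M K := exist _ _ (coalg_comp_hom M N K g f).

Lemma coalg_comp_assoc (A B C D : coalg) (h : coalg_hom C D)
  (g : coalg_hom B C) (f : coalg_hom A B) :
  coalg_comp A C D h (coalg_comp A B C g f) = coalg_comp A B D (coalg_comp B C D h g) f.
Proof. apply coalg_hom_eq; reflexivity. Qed.

Lemma coalg_comp_id_l (A B : coalg) (f : coalg_hom A B) :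
  coalg_comp A B B (coalg_idm B) f = f.
Proof. apply coalg_hom_eq; reflexivity. Qed.

Lemma coalg_comp_id_r (A B : coalg) (f : coalg_hom A B) :
  coalg_comp A A B f (coalg_idm A) = f.
Proof. apply coalg_hom_eq; reflexivity. Qed.

Definition CoalgCat : Category :=
  {| Obj := coalg; Hom := coalg_hom; idm := coalg_idm; comp := coalg_comp;
     comp_assoc := coalg_comp_assoc; comp_id_l := coalg_comp_id_l;
     comp_id_r := coalg_comp_id_r |}.

Definition M_F : forall A B : Obj CoalgCat, Hom CoalgCat A B -> Prop :=
  fun A B h => injective (proj1_sig h).

End Coalg.

From Stdlib Require Import ProofIrrelevance FunctionalExtensionality ClassicalEpsilon.

(* The forgetful functor from F-coalgebras to sets creates pushouts along
   injections: the pushout of the underlying sets carries a unique structure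
   making the cocone maps homomorphisms.  Because F preserves pullbacks along
   injections, it also creates pullbacks along injections: F maps the pullback
   of sets to a pullback, whose universal property provides the structure and
   whose joint monicity makes the mediating maps homomorphisms.  As such limits
   and colimits are unique up to isomorphism, a square of coalgebras with an
   injective leg is a pushout (pullback) iff its underlying square of sets is,
   so every M-adhesivity axiom reduces to sets.  There, the pushout of an
   injection m : A -> B along f : A -> C is the disjoint union of C and
   B \ m(A), and the van Kampen property is checked element by element. *)

Definition opposite (C : Category) : Category :=
  {| Obj := Obj C;
     Hom := fun A B => Hom C B A;
     idm := idm C;
     comp := fun A B D g f => comp C f g;
     comp_assoc := fun A B D E h g f => eq_sym (comp_assoc C E D B A f g h);
     comp_id_l := fun A B f => comp_id_r C B A f;
     comp_id_r := fun A B f => comp_id_l C B A f |}.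

Definition opposite_functor {C E : Category} (U : Functor C E) :
  Functor (opposite C) (opposite E) :=
  Build_Functor (opposite C) (opposite E) (Fobj U) (fun A B f => Fmap U f)
    (Fmap_id C E U) (fun A B D g f => Fmap_comp C E U D B A f g).

Lemma pushout_jointly_epi (C : Category) {A B Cc D X : Obj C}
  {m : Hom C A B} {f : Hom C A Cc} {g : Hom C B D} {n : Hom C Cc D}
  (h1 h2 : Hom C D X) :
  is_pushout C m f g n ->
  comp C h1 g = comp C h2 g -> comp C h1 n = comp C h2 n -> h1 = h2.
Proof.
  intros [Hc Hu] E1 E2.
  assert (Hcocone : comp C (comp C h1 g) m = comp C (comp C h1 n) f)
    by (rewrite <- !comp_assoc, Hc; reflexivity).
  destruct (Hu X _ _ Hcocone) as [u [_ Huniq]].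
  transitivity u; [symmetry|]; apply Huniq; split; auto.
Qed.

(* [is_pullback C p q f g] is by definition [is_pushout (opposite C) f g p q],
   so facts about pullbacks are the duals of those about pushouts. *)
Lemma pullback_jointly_mono (C : Category) {P B Cc D X : Obj C}
  {p : Hom C P B} {q : Hom C P Cc} {f : Hom C B D} {g : Hom C Cc D}
  (h1 h2 : Hom C X P) :
  is_pullback C p q f g ->
  comp C p h1 = comp C p h2 -> comp C q h1 = comp C q h2 -> h1 = h2.
Proof. exact (@pushout_jointly_epi (opposite C) D B Cc P X f g p q h1 h2). Qed.

Lemma pushout_comparison (C : Category) {A B Cc D D' : Obj C}
  {m : Hom C A B} {f : Hom C A Cc} {g : Hom C B D} {n : Hom C Cc D}
  {g' : Hom C B D'} {n' : Hom C Cc D'} :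
  is_pushout C m f g n -> is_pushout C m f g' n' ->
  exists (phi : Hom C D D') (psi : Hom C D' D),
    comp C phi g = g' /\ comp C phi n = n' /\
    comp C psi phi = idm C D /\ comp C phi psi = idm C D'.
Proof.
  intros H H'.
  destruct (proj2 H _ g' n' (proj1 H')) as [phi [[Hg Hn] _]].
  destruct (proj2 H' _ g n (proj1 H)) as [psi [[Hg' Hn'] _]].
  exists phi, psi. repeat split; auto.
  - apply (pushout_jointly_epi C _ _ H);
      rewrite <- comp_assoc, ?Hg, ?Hn, ?Hg', ?Hn', comp_id_l; reflexivity.
  - apply (pushout_jointly_epi C _ _ H');
      rewrite <- comp_assoc, ?Hg', ?Hn', ?Hg, ?Hn, comp_id_l; reflexivity.
Qed.

Lemma is_pushout_iso (C : Category) {A B Cc D D' : Obj C}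
  {m : Hom C A B} {f : Hom C A Cc} {g : Hom C B D} {n : Hom C Cc D}
  (phi : Hom C D D') (psi : Hom C D' D) :
  is_pushout C m f g n -> comp C psi phi = idm C D -> comp C phi psi = idm C D' ->
  is_pushout C m f (comp C phi g) (comp C phi n).
Proof.
  intros [Hc Hu] Hpsi Hphi. split.
  - rewrite <- !comp_assoc, Hc. reflexivity.
  - intros X x y Hxy. destruct (Hu X x y Hxy) as [u [[Hg Hn] Huniq]].
    exists (comp C u psi). split.
    + rewrite <- !comp_assoc, !(comp_assoc C _ _ _ _ psi phi), Hpsi, !comp_id_l.
      split; assumption.
    + intros u' [E1 E2].
      assert (Hu' : comp C u' phi = u)
        by (symmetry; apply Huniq; rewrite <- !comp_assoc; split; assumption).
      rewrite <- Hu', <- comp_assoc, Hphi, comp_id_r. reflexivity.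
Qed.

Lemma functor_preserves_pushout {C E : Category} (U : Functor C E)
  {A B Cc D0 D : Obj C} {m : Hom C A B} {f : Hom C A Cc}
  {g0 : Hom C B D0} {n0 : Hom C Cc D0} {g : Hom C B D} {n : Hom C Cc D} :
  is_pushout C m f g0 n0 ->
  is_pushout E (Fmap U m) (Fmap U f) (Fmap U g0) (Fmap U n0) ->
  is_pushout C m f g n ->
  is_pushout E (Fmap U m) (Fmap U f) (Fmap U g) (Fmap U n).
Proof.
  intros H0 HU0 H.
  destruct (pushout_comparison C H0 H) as (phi & psi & <- & <- & Hpsi & Hphi).
  rewrite !Fmap_comp.
  apply (is_pushout_iso E _ (Fmap U psi) HU0);
    rewrite <- Fmap_comp, ?Hpsi, ?Hphi; apply Fmap_id.
Qed.

Lemma functor_preserves_pullback {C E : Category} (U : Functor C E)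
  {P0 P B Cc D : Obj C} {f : Hom C B D} {g : Hom C Cc D}
  {p0 : Hom C P0 B} {q0 : Hom C P0 Cc} {p : Hom C P B} {q : Hom C P Cc} :
  is_pullback C p0 q0 f g ->
  is_pullback E (Fmap U p0) (Fmap U q0) (Fmap U f) (Fmap U g) ->
  is_pullback C p q f g ->
  is_pullback E (Fmap U p) (Fmap U q) (Fmap U f) (Fmap U g).
Proof.
  exact (@functor_preserves_pushout _ _ (opposite_functor U) D B Cc P0 P f g p0 q0 p q).
Qed.

Record pullback_pointwise {P B Cc D : Type}
  (p : P -> B) (q : P -> Cc) (f : B -> D) (g : Cc -> D) : Prop := {
  pb_comm : forall x, f (p x) = g (q x);
  pb_lift : forall b c, f b = g c -> exists x, p x = b /\ q x = c;
  pb_joint_inj : forall x y, p x = p y -> q x = q y -> x = y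
}.

(* For injective [m], the pushout [D] of [m] and [f] is the disjoint union of
   [Cc] (embedded by [n]) and [B \ m(A)] (embedded by [g]). *)
Record pushout_pointwise {A B Cc D : Type}
  (m : A -> B) (f : A -> Cc) (g : B -> D) (n : Cc -> D) : Prop := {
  po_comm : forall a, g (m a) = n (f a);
  po_joint_surj : forall d, (exists b, g b = d) \/ (exists c, n c = d);
  po_g_fibre : forall b1 b2, g b1 = g b2 ->
    b1 = b2 \/ exists a1 a2, b1 = m a1 /\ b2 = m a2 /\ f a1 = f a2;
  po_n_inj : injective n;
  po_g_n_meet : forall b c, g b = n c -> exists a, b = m a /\ c = f a
}.

Lemma is_pullback_Sets_iff {P B Cc D : Type}
  (p : P -> B) (q : P -> Cc) (f : B -> D) (g : Cc -> D) :
  is_pullback SetsCat p q f g <-> pullback_pointwise p q f g.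
Proof.
  split.
  - intros [Hc Hu]. split.
    + exact (equal_f Hc).
    + intros b c E.
      destruct (Hu unit (fun _ => b) (fun _ => c)) as [u [[Hp Hq] _]].
      { apply functional_extensionality; intro; exact E. }
      exists (u tt). exact (conj (equal_f Hp tt) (equal_f Hq tt)).
    + intros x y Hp Hq.
      destruct (Hu unit (fun _ => p x) (fun _ => q x)) as [u [_ Huniq]].
      { apply functional_extensionality; intro; exact (equal_f Hc x). }
      assert (Ex : u = fun _ => x) by (apply Huniq; split; reflexivity).
      assert (Ey : u = fun _ => y)
        by (apply Huniq; split; apply functional_extensionality; intro; auto).
      exact (equal_f (eq_trans (eq_sym Ex) Ey) tt).
  - intros [Hc Hlift Hinj]. split.
    + apply functional_extensionality; exact Hc.
    + intros X x y Hxy.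
      destruct (choice (fun z w => p w = x z /\ q w = y z)) as [u Hu].
      { intro z. apply Hlift. exact (equal_f Hxy z). }
      exists u. split.
      * split; apply functional_extensionality; intro z; apply Hu.
      * intros u' [E1 E2]. apply functional_extensionality; intro z.
        destruct (Hu z) as [Hpz Hqz]. apply Hinj.
        -- rewrite Hpz. exact (eq_sym (equal_f E1 z)).
        -- rewrite Hqz. exact (eq_sym (equal_f E2 z)).
Qed.

Lemma is_pushout_Sets_of_pointwise {A B Cc D : Type}
  (m : A -> B) (f : A -> Cc) (g : B -> D) (n : Cc -> D) :
  pushout_pointwise m f g n -> is_pushout SetsCat m f g n.
Proof.
  intros [Hc Hsurj Hfibre Hn Hmeet]. split.
  - apply functional_extensionality; exact Hc.
  - intros X x y Hxy. pose proof (equal_f Hxy) as hxy; simpl in hxy.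
    destruct (choice (fun d v => (exists b, g b = d /\ x b = v) \/
                                 (exists c, n c = d /\ y c = v))) as [u Hu].
    { intro d. destruct (Hsurj d) as [[b <-]|[c <-]]; eauto. }
    assert (Hug : forall b, u (g b) = x b).
    { intro b. destruct (Hu (g b)) as [[b' [E <-]]|[c [E <-]]].
      - destruct (Hfibre _ _ E) as [->|(a1 & a2 & -> & -> & Ef)]; [reflexivity|].
        rewrite !hxy, Ef. reflexivity.
      - destruct (Hmeet _ _ (eq_sym E)) as [a [-> ->]]. symmetry; apply hxy. }
    assert (Hun : forall c, u (n c) = y c).
    { intro c. destruct (Hu (n c)) as [[b [E <-]]|[c' [E <-]]].
      - destruct (Hmeet _ _ E) as [a [-> ->]]. apply hxy.
      - f_equal. exact (Hn _ _ E). }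
    exists u. split.
    + split; apply functional_extensionality; assumption.
    + intros u' [E1 E2]. apply functional_extensionality; intro d.
      destruct (Hsurj d) as [[b <-]|[c <-]].
      * rewrite Hug. exact (eq_sym (equal_f E1 b)).
      * rewrite Hun. exact (eq_sym (equal_f E2 c)).
Qed.

Lemma pushout_pointwise_transfer {A B Cc D D0 : Type}
  (m : A -> B) (f : A -> Cc) (g : B -> D) (n : Cc -> D)
  (phi : D -> D0) (g0 : B -> D0) (n0 : Cc -> D0) :
  injective phi -> (forall b, phi (g b) = g0 b) -> (forall c, phi (n c) = n0 c) ->
  (forall a, g (m a) = n (f a)) ->
  pushout_pointwise m f g0 n0 -> pushout_pointwise m f g n.
Proof.
  intros Hphi Eg En Hc [_ Hsurj Hfibre Hn Hmeet]. split.
  - exact Hc.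
  - intro d. destruct (Hsurj (phi d)) as [[b E]|[c E]].
    + left; exists b. apply Hphi. rewrite Eg; exact E.
    + right; exists c. apply Hphi. rewrite En; exact E.
  - intros b1 b2 E. apply Hfibre. rewrite <- !Eg, E. reflexivity.
  - intros c1 c2 E. apply Hn. rewrite <- !En, E. reflexivity.
  - intros b c E. apply Hmeet. rewrite <- Eg, <- En, E. reflexivity.
Qed.

Section PushoutConstruction.
Context {A B Cc : Type} (m : A -> B) (f : A -> Cc).

Definition pushout_carrier : Type := ({b : B | ~ exists a, m a = b} + Cc)%type.

Definition pushout_inl (b : B) : pushout_carrier :=
  match excluded_middle_informative (exists a, m a = b) with
  | left h => inr (f (proj1_sig (constructive_indefinite_description _ h)))
  | right h => inl (exist _ b h)
  end.

Lemma pushout_inl_outside (b : B) (h : ~ exists a, m a = b) :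
  pushout_inl b = inl (exist _ b h).
Proof.
  unfold pushout_inl. destruct (excluded_middle_informative _) as [h'|h'].
  - contradiction.
  - do 2 f_equal. apply proof_irrelevance.
Qed.

Hypothesis m_inj : injective m.

Lemma pushout_inl_image (a : A) : pushout_inl (m a) = inr (f a).
Proof.
  unfold pushout_inl. destruct (excluded_middle_informative _) as [h|h].
  - destruct (constructive_indefinite_description _ h) as [a' E]; simpl.
    rewrite (m_inj _ _ E). reflexivity.
  - exfalso. eauto.
Qed.

Lemma pushout_carrier_pointwise : pushout_pointwise m f pushout_inl inr.
Proof.
  assert (Hcases : forall b, (exists a, m a = b) \/ ~ exists a, m a = b) by (intro; apply classic).
  split.
  - exact pushout_inl_image.
  - intros [[b h]|c]; [left; exists b; apply pushout_inl_outside | right; eauto].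
  - intros b1 b2 E.
    destruct (Hcases b1) as [[a1 <-]|h1], (Hcases b2) as [[a2 <-]|h2];
      rewrite ?pushout_inl_image, ?pushout_inl_outside with (h := h1),
        ?pushout_inl_outside with (h := h2) in E; try discriminate.
    + right. exists a1, a2. injection E. auto.
    + left. injection E. auto.
  - intros c1 c2 E. injection E. auto.
  - intros b c E. destruct (Hcases b) as [[a <-]|h].
    + rewrite pushout_inl_image in E. injection E. eauto.
    + rewrite (pushout_inl_outside _ h) in E. discriminate.
Qed.

End PushoutConstruction.

Lemma pushout_pointwise_of_is_pushout_Sets {A B Cc D : Type}
  (m : A -> B) (f : A -> Cc) (g : B -> D) (n : Cc -> D) :
  injective m -> is_pushout SetsCat m f g n -> pushout_pointwise m f g n.
Proof.
  intros Hm H.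
  pose proof (pushout_carrier_pointwise m f Hm) as Hcanonical.
  destruct (pushout_comparison SetsCat H (is_pushout_Sets_of_pointwise _ _ _ _ Hcanonical))
    as (phi & psi & Eg & En & Epsi & _).
  apply (pushout_pointwise_transfer m f g n phi (pushout_inl m f) inr).
  - intros x y E.
    pose proof (equal_f Epsi x) as Ex. pose proof (equal_f Epsi y) as Ey.
    simpl in Ex, Ey. congruence.
  - exact (equal_f Eg).
  - exact (equal_f En).
  - exact (equal_f (proj1 H)).
  - exact Hcanonical.
Qed.

Definition pullback_carrier {B Cc D : Type} (f : B -> D) (g : Cc -> D) : Type :=
  {bc : B * Cc | f (fst bc) = g (snd bc)}.

Lemma pullback_carrier_pointwise {B Cc D : Type} (f : B -> D) (g : Cc -> D) :
  pullback_pointwise (fun z : pullback_carrier f g => fst (proj1_sig z))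
    (fun z => snd (proj1_sig z)) f g.
Proof.
  split.
  - intro z. exact (proj2_sig z).
  - intros b c E. exists (exist _ (b, c) E). auto.
  - intros [[b1 c1] E1] [[b2 c2] E2]; simpl. intros -> ->.
    f_equal. apply proof_irrelevance.
Qed.

Section SetsVanKampen.
Context {A B Cc D A' B' C' D' : Type}
  (m : A -> B) (f : A -> Cc) (g : B -> D) (n : Cc -> D)
  (m' : A' -> B') (f' : A' -> C') (g' : B' -> D') (n' : C' -> D')
  (a : A' -> A) (b : B' -> B) (c : C' -> Cc) (d : D' -> D).
Hypotheses (bottom : pushout_pointwise m f g n)
  (top_comm : forall x, g' (m' x) = n' (f' x))
  (back_m : pullback_pointwise m' a b m) (back_f : pullback_pointwise f' a c f)
  (front_g_comm : forall x, g (b x) = d (g' x))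
  (front_n_comm : forall x, n (c x) = d (n' x))
  (b_inj : injective b) (c_inj : injective c).

Section TopJointlySurjective.
Hypothesis top_joint_surj : forall z, (exists y, g' y = z) \/ (exists w, n' w = z).

Lemma front_g_pullback : pullback_pointwise g' b d g.
Proof.
  split.
  - intro x. symmetry. apply front_g_comm.
  - intros z y E. destruct (top_joint_surj z) as [[y' <-]|[w <-]].
    + rewrite <- front_g_comm in E.
      destruct (po_g_fibre _ _ _ _ bottom _ _ E) as [<-|(a1 & a2 & E1 & E2 & Ef)].
      { exists y'. auto. }
      destruct (pb_lift _ _ _ _ back_m _ _ E1) as [x [Hx1 Hx2]].
      assert (Ecx : c (f' x) = f a2) by (rewrite (pb_comm _ _ _ _ back_f), Hx2; exact Ef).
      destruct (pb_lift _ _ _ _ back_f _ _ Ecx) as [x' [Hx'1 Hx'2]].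
      exists (m' x'). split.
      * rewrite top_comm, Hx'1, <- top_comm, Hx1. reflexivity.
      * rewrite (pb_comm _ _ _ _ back_m), Hx'2. auto.
    + rewrite <- front_n_comm in E.
      destruct (po_g_n_meet _ _ _ _ bottom _ _ (eq_sym E)) as [a0 [E1 E2]].
      destruct (pb_lift _ _ _ _ back_f _ _ E2) as [x [Hx1 Hx2]].
      exists (m' x). split.
      * rewrite top_comm, Hx1. reflexivity.
      * rewrite (pb_comm _ _ _ _ back_m), Hx2. auto.
  - intros x y _ E. exact (b_inj _ _ E).
Qed.

Lemma front_n_pullback : pullback_pointwise n' c d n.
Proof.
  split.
  - intro x. symmetry. apply front_n_comm.
  - intros z w E. destruct (top_joint_surj z) as [[y <-]|[w' <-]].
    + rewrite <- front_g_comm in E.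
      destruct (po_g_n_meet _ _ _ _ bottom _ _ E) as [a0 [E1 E2]].
      destruct (pb_lift _ _ _ _ back_m _ _ E1) as [x [Hx1 Hx2]].
      exists (f' x). split.
      * rewrite <- top_comm, Hx1. reflexivity.
      * rewrite (pb_comm _ _ _ _ back_f), Hx2. auto.
    + rewrite <- front_n_comm in E. apply (po_n_inj _ _ _ _ bottom) in E. subst.
      exists w'. auto.
  - intros x y _ E. exact (c_inj _ _ E).
Qed.

End TopJointlySurjective.

Lemma top_pushout_of_front_pullbacks :
  pullback_pointwise g' b d g -> pullback_pointwise n' c d n ->
  pushout_pointwise m' f' g' n'.
Proof.
  intros front_g front_n. split.
  - exact top_comm.
  - intro z. destruct (po_joint_surj _ _ _ _ bottom (d z)) as [[y E]|[w E]].
    + destruct (pb_lift _ _ _ _ front_g _ _ (eq_sym E)) as [x [Hx _]]. left; eauto.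
    + destruct (pb_lift _ _ _ _ front_n _ _ (eq_sym E)) as [x [Hx _]]. right; eauto.
  - intros y1 y2 E.
    assert (E' : g (b y1) = g (b y2)) by (rewrite !front_g_comm, E; reflexivity).
    destruct (po_g_fibre _ _ _ _ bottom _ _ E') as [Eb|(a1 & a2 & E1 & E2 & Ef)].
    { left. exact (b_inj _ _ Eb). }
    right.
    destruct (pb_lift _ _ _ _ back_m _ _ E1) as [x1 [Hx1 Ha1]].
    destruct (pb_lift _ _ _ _ back_m _ _ E2) as [x2 [Hx2 Ha2]].
    exists x1, x2. repeat split; auto.
    apply c_inj. rewrite !(pb_comm _ _ _ _ back_f), Ha1, Ha2. exact Ef.
  - intros w1 w2 E. apply c_inj, (po_n_inj _ _ _ _ bottom).
    rewrite !front_n_comm, E. reflexivity.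
  - intros y w E.
    assert (E' : g (b y) = n (c w)) by (rewrite front_g_comm, front_n_comm, E; reflexivity).
    destruct (po_g_n_meet _ _ _ _ bottom _ _ E') as [a0 [E1 E2]].
    destruct (pb_lift _ _ _ _ back_m _ _ E1) as [x [Hx Ha]].
    exists x. split; [auto|].
    apply c_inj. rewrite (pb_comm _ _ _ _ back_f), Ha. exact E2.
Qed.

End SetsVanKampen.

Lemma Sets_vertical_weak_van_Kampen {A B Cc D A' B' C' D' : Type}
  (m : A -> B) (f : A -> Cc) (g : B -> D) (n : Cc -> D)
  (m' : A' -> B') (f' : A' -> C') (g' : B' -> D') (n' : C' -> D')
  (a : A' -> A) (b : B' -> B) (c : C' -> Cc) (d : D' -> D) :
  is_pushout SetsCat m f g n -> injective m ->
  comp SetsCat g' m' = comp SetsCat n' f' ->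
  comp SetsCat g b = comp SetsCat d g' -> comp SetsCat n c = comp SetsCat d n' ->
  is_pullback SetsCat m' a b m -> is_pullback SetsCat f' a c f ->
  injective a -> injective b -> injective c ->
  (is_pushout SetsCat m' f' g' n' <->
     is_pullback SetsCat g' b d g /\ is_pullback SetsCat n' c d n).
Proof.
  intros Hbottom Hm Htop Hg Hn Hback_m Hback_f Ha Hb Hc.
  apply pushout_pointwise_of_is_pushout_Sets in Hbottom; [|exact Hm].
  apply is_pullback_Sets_iff in Hback_m, Hback_f.
  pose proof (equal_f Htop) as top_comm. pose proof (equal_f Hg) as front_g_comm.
  pose proof (equal_f Hn) as front_n_comm. simpl in top_comm, front_g_comm, front_n_comm.
  rewrite !is_pullback_Sets_iff. split.
  - intro Htop_po.
    assert (Hm' : injective m').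
    { intros x y E. apply Ha, Hm. rewrite <- !(pb_comm _ _ _ _ Hback_m), E. reflexivity. }
    apply pushout_pointwise_of_is_pushout_Sets in Htop_po; [|exact Hm'].
    split; [eapply front_g_pullback | eapply front_n_pullback]; eauto using po_joint_surj.
  - intros [Hfront_g Hfront_n]. apply is_pushout_Sets_of_pointwise.
    eapply top_pushout_of_front_pullbacks; eauto.
Qed.

Section Coalgebras.
Variable F : Functor SetsCat SetsCat.

Definition forget : Functor (CoalgCat F) SetsCat :=
  Build_Functor (CoalgCat F) SetsCat (carrier F) (fun A B h => proj1_sig h)
    (fun A => eq_refl) (fun A B E g f => eq_refl).

Lemma Fmap_comp_apply {X Y Z : Type} (h : Y -> Z) (k : X -> Y) (t : Fobj F X) :
  Fmap F (comp SetsCat h k) t = Fmap F h (Fmap F k t).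
Proof. exact (equal_f (Fmap_comp _ _ F X Y Z h k) t). Qed.

Lemma coalg_hom_apply {X Y : coalg F} (h : coalg_hom F X Y) (x : carrier F X) :
  Fmap F (proj1_sig h) (str F X x) = str F Y (proj1_sig h x).
Proof. exact (equal_f (proj2_sig h) x). Qed.

Lemma coalg_hom_comm {X Y : coalg F} (h : coalg_hom F X Y) :
  comp SetsCat (Fmap F (proj1_sig h)) (str F X) = comp SetsCat (str F Y) (proj1_sig h).
Proof. exact (proj2_sig h). Qed.

Lemma coalg_mono_of_injective {A B : coalg F} (m : coalg_hom F A B) :
  injective (proj1_sig m) -> is_mono (CoalgCat F) m.
Proof.
  intros Hm Z h k E. apply coalg_hom_eq, functional_extensionality; intro z.
  apply Hm. exact (equal_f (f_equal (@proj1_sig _ _) E) z).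
Qed.

Lemma coalg_square_precomp {B D X : coalg F} (g : coalg_hom F B D)
  (x : coalg_hom F B X) (u : carrier F D -> carrier F X) :
  comp SetsCat u (proj1_sig g) = proj1_sig x ->
  comp SetsCat (comp SetsCat (Fmap F u) (str F D)) (proj1_sig g) =
  comp SetsCat (comp SetsCat (str F X) u) (proj1_sig g).
Proof.
  intro Hx.
  rewrite <- !comp_assoc, <- coalg_hom_comm, comp_assoc, <- Fmap_comp, Hx.
  apply coalg_hom_comm.
Qed.

Lemma coalg_square_postcomp {X P B : coalg F} (p : coalg_hom F P B)
  (x : coalg_hom F X B) (u : carrier F X -> carrier F P) :
  comp SetsCat (proj1_sig p) u = proj1_sig x ->
  comp SetsCat (Fmap F (proj1_sig p)) (comp SetsCat (Fmap F u) (str F X)) =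
  comp SetsCat (Fmap F (proj1_sig p)) (comp SetsCat (str F P) u).
Proof.
  intro Hx.
  rewrite !comp_assoc, <- Fmap_comp, Hx, !coalg_hom_comm, <- comp_assoc, Hx.
  reflexivity.
Qed.

Lemma coalg_pushout_of_Sets_pushout {A B Cc D : coalg F}
  (m : coalg_hom F A B) (f : coalg_hom F A Cc)
  (g : coalg_hom F B D) (n : coalg_hom F Cc D) :
  is_pushout SetsCat (proj1_sig m) (proj1_sig f) (proj1_sig g) (proj1_sig n) ->
  is_pushout (CoalgCat F) m f g n.
Proof.
  intro H. split.
  - apply coalg_hom_eq, (proj1 H).
  - intros X x y Hxy.
    destruct (proj2 H _ (proj1_sig x) (proj1_sig y) (f_equal (@proj1_sig _ _) Hxy))
      as [u [[Hg Hn] Huniq]].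
    assert (Hu : is_coalg_hom F D X u).
    { apply (pushout_jointly_epi SetsCat _ _ H);
        [apply (coalg_square_precomp g x) | apply (coalg_square_precomp n y)]; assumption. }
    exists (exist _ u Hu). split.
    + split; apply coalg_hom_eq; assumption.
    + intros u' [E1 E2]. apply coalg_hom_eq, Huniq.
      split; [exact (f_equal (@proj1_sig _ _) E1) | exact (f_equal (@proj1_sig _ _) E2)].
Qed.

Lemma coalg_Sets_pushout_exists {A B Cc : coalg F}
  (m : coalg_hom F A B) (f : coalg_hom F A Cc) :
  injective (proj1_sig m) ->
  exists (D : coalg F) (g : coalg_hom F B D) (n : coalg_hom F Cc D),
    is_pushout SetsCat (proj1_sig m) (proj1_sig f) (proj1_sig g) (proj1_sig n).
Proof.
  intro Hm.
  pose (g0 := pushout_inl (proj1_sig m) (proj1_sig f)).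
  pose (n0 := @inr {b | ~ exists a, proj1_sig m a = b} (carrier F Cc)).
  pose (D := {| carrier := pushout_carrier (Cc := carrier F Cc) (proj1_sig m);
                str := fun z => match z with
                                | inl b => Fmap F g0 (str F B (proj1_sig b))
                                | inr c => Fmap F n0 (str F Cc c)
                                end |}).
  assert (Hg0 : is_coalg_hom F B D g0).
  { apply functional_extensionality; intro b; simpl.
    destruct (classic (exists a, proj1_sig m a = b)) as [[a <-]|h].
    - unfold g0. rewrite pushout_inl_image by exact Hm.
      rewrite <- coalg_hom_apply, <- (coalg_hom_apply f), <- !Fmap_comp_apply.
      f_equal. apply functional_extensionality; intro a'.
      exact (pushout_inl_image _ _ Hm a').
    - unfold g0. rewrite (pushout_inl_outside _ _ _ h). reflexivity. }
  assert (Hn0 : is_coalg_hom F Cc D n0) by reflexivity.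
  exists D, (exist _ g0 Hg0), (exist _ n0 Hn0).
  exact (is_pushout_Sets_of_pointwise _ _ _ _ (pushout_carrier_pointwise _ _ Hm)).
Qed.

Lemma coalg_pushout_iff {A B Cc D : coalg F}
  (m : coalg_hom F A B) (f : coalg_hom F A Cc)
  (g : coalg_hom F B D) (n : coalg_hom F Cc D) :
  injective (proj1_sig m) ->
  is_pushout (CoalgCat F) m f g n <->
  is_pushout SetsCat (proj1_sig m) (proj1_sig f) (proj1_sig g) (proj1_sig n).
Proof.
  intro Hm. split; [|apply coalg_pushout_of_Sets_pushout].
  destruct (coalg_Sets_pushout_exists m f Hm) as (D0 & g0 & n0 & H0).
  exact (functor_preserves_pushout forget (coalg_pushout_of_Sets_pushout _ _ _ _ H0) H0).
Qed.

Hypothesis HF : preserves_pullbacks_along_injective F.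

Lemma coalg_pullback_of_Sets_pullback {P B Cc D : coalg F}
  (p : coalg_hom F P B) (q : coalg_hom F P Cc)
  (f : coalg_hom F B D) (g : coalg_hom F Cc D) :
  injective (proj1_sig f) \/ injective (proj1_sig g) ->
  is_pullback SetsCat (proj1_sig p) (proj1_sig q) (proj1_sig f) (proj1_sig g) ->
  is_pullback (CoalgCat F) p q f g.
Proof.
  intros Hfg H. split.
  - apply coalg_hom_eq, (proj1 H).
  - intros X x y Hxy.
    destruct (proj2 H _ (proj1_sig x) (proj1_sig y) (f_equal (@proj1_sig _ _) Hxy))
      as [u [[Hp Hq] Huniq]].
    assert (Hu : is_coalg_hom F X P u).
    { apply (pullback_jointly_mono SetsCat _ _ (HF _ _ _ _ _ _ _ _ H Hfg));
        [apply (coalg_square_postcomp p x) | apply (coalg_square_postcomp q y)]; assumption. }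
    exists (exist _ u Hu). split.
    + split; apply coalg_hom_eq; assumption.
    + intros u' [E1 E2]. apply coalg_hom_eq, Huniq.
      split; [exact (f_equal (@proj1_sig _ _) E1) | exact (f_equal (@proj1_sig _ _) E2)].
Qed.

Lemma coalg_Sets_pullback_exists {B Cc D : coalg F}
  (f : coalg_hom F B D) (g : coalg_hom F Cc D) :
  injective (proj1_sig f) \/ injective (proj1_sig g) ->
  exists (P : coalg F) (p : coalg_hom F P B) (q : coalg_hom F P Cc),
    is_pullback SetsCat (proj1_sig p) (proj1_sig q) (proj1_sig f) (proj1_sig g).
Proof.
  intro Hfg.
  pose (p0 := fun z : pullback_carrier (proj1_sig f) (proj1_sig g) => fst (proj1_sig z)).
  pose (q0 := fun z : pullback_carrier (proj1_sig f) (proj1_sig g) => snd (proj1_sig z)).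
  assert (H0 : pullback_pointwise p0 q0 (proj1_sig f) (proj1_sig g))
    by apply pullback_carrier_pointwise.
  assert (HF0 : pullback_pointwise (Fmap F p0) (Fmap F q0)
                  (Fmap F (proj1_sig f)) (Fmap F (proj1_sig g))).
  { apply is_pullback_Sets_iff, HF; [apply is_pullback_Sets_iff|]; assumption. }
  destruct (choice (fun z t => Fmap F p0 t = str F B (p0 z) /\ Fmap F q0 t = str F Cc (q0 z)))
    as [s Hs].
  { intro z. apply (pb_lift _ _ _ _ HF0). rewrite !coalg_hom_apply. f_equal. apply H0. }
  pose (P := {| carrier := pullback_carrier (proj1_sig f) (proj1_sig g); str := s |}).
  assert (Hp0 : is_coalg_hom F P B p0)
    by (apply functional_extensionality; intro z; apply Hs).
  assert (Hq0 : is_coalg_hom F P Cc q0)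
    by (apply functional_extensionality; intro z; apply Hs).
  exists P, (exist _ p0 Hp0), (exist _ q0 Hq0).
  apply is_pullback_Sets_iff. exact H0.
Qed.

Lemma coalg_pullback_iff {P B Cc D : coalg F}
  (p : coalg_hom F P B) (q : coalg_hom F P Cc)
  (f : coalg_hom F B D) (g : coalg_hom F Cc D) :
  injective (proj1_sig f) \/ injective (proj1_sig g) ->
  is_pullback (CoalgCat F) p q f g <->
  is_pullback SetsCat (proj1_sig p) (proj1_sig q) (proj1_sig f) (proj1_sig g).
Proof.
  intro Hfg. split; [|apply coalg_pullback_of_Sets_pullback, Hfg].
  destruct (coalg_Sets_pullback_exists f g Hfg) as (P0 & p0 & q0 & H0).
  exact (functor_preserves_pullback forget (coalg_pullback_of_Sets_pullback _ _ _ _ Hfg H0) H0).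
Qed.

Lemma coalg_vertical_weak_van_Kampen (A B Cc D A' B' C' D' : coalg F)
  (m : coalg_hom F A B) (f : coalg_hom F A Cc)
  (g : coalg_hom F B D) (n : coalg_hom F Cc D)
  (m' : coalg_hom F A' B') (f' : coalg_hom F A' C')
  (g' : coalg_hom F B' D') (n' : coalg_hom F C' D')
  (a : coalg_hom F A' A) (b : coalg_hom F B' B)
  (c : coalg_hom F C' Cc) (d : coalg_hom F D' D) :
  is_pushout (CoalgCat F) m f g n -> injective (proj1_sig m) ->
  comp (CoalgCat F) g' m' = comp (CoalgCat F) n' f' ->
  comp (CoalgCat F) m a = comp (CoalgCat F) b m' ->
  comp (CoalgCat F) f a = comp (CoalgCat F) c f' ->
  comp (CoalgCat F) g b = comp (CoalgCat F) d g' ->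
  comp (CoalgCat F) n c = comp (CoalgCat F) d n' ->
  is_pullback (CoalgCat F) m' a b m -> is_pullback (CoalgCat F) f' a c f ->
  injective (proj1_sig a) -> injective (proj1_sig b) ->
  injective (proj1_sig c) -> injective (proj1_sig d) ->
  (is_pushout (CoalgCat F) m' f' g' n' <->
     is_pullback (CoalgCat F) g' b d g /\ is_pullback (CoalgCat F) n' c d n).
Proof.
  intros Hbottom Hm Htop Hma _ Hgb Hnc Hback_m Hback_f Ha Hb Hc Hd.
  assert (Hm' : injective (proj1_sig m')).
  { intros x y E. apply Ha, Hm.
    pose proof (equal_f (f_equal (@proj1_sig _ _) Hma)) as Ema. simpl in Ema.
    rewrite !Ema. f_equal. exact E. }
  apply coalg_pushout_iff in Hbottom; [|exact Hm].
  apply coalg_pullback_iff in Hback_m; [|left; exact Hb].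
  apply coalg_pullback_iff in Hback_f; [|left; exact Hc].
  rewrite (coalg_pushout_iff m' f' g' n' Hm'), (coalg_pullback_iff g' b d g (or_introl Hd)),
    (coalg_pullback_iff n' c d n (or_introl Hd)).
  eapply Sets_vertical_weak_van_Kampen; try eassumption;
    [exact (f_equal (@proj1_sig _ _) Htop) | exact (f_equal (@proj1_sig _ _) Hgb)
    | exact (f_equal (@proj1_sig _ _) Hnc)].
Qed.

End Coalgebras.

Theorem mainTheorem1 (F : Functor SetsCat SetsCat) :
  preserves_pullbacks_along_injective F ->
  M_adhesive (CoalgCat F) (M_F F).
Proof.
  intro HF. unfold M_F. split.
  - intros A B m. apply coalg_mono_of_injective.
  - intros A x y E. exact E.
  - intros A B D g f Hf Hg x y E. exact (Hf _ _ (Hg _ _ E)).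
  - intros A B Cc m f Hm.
    destruct (coalg_Sets_pushout_exists F m f Hm) as (D & g & n & H).
    exists D, g, n. exact (coalg_pushout_of_Sets_pushout F m f g n H).
  - intros B Cc D f g Hfg.
    destruct (coalg_Sets_pullback_exists F HF f g Hfg) as (P & p & q & H).
    exists P, p, q. exact (coalg_pullback_of_Sets_pullback F HF p q f g Hfg H).
  - intros A B Cc D m f g n H Hm.
    apply coalg_pushout_iff in H; [|exact Hm].
    exact (po_n_inj _ _ _ _ (pushout_pointwise_of_is_pushout_Sets _ _ _ _ Hm H)).
  - intros P B Cc D p q f g H Hf x y E.
    apply coalg_pullback_iff, is_pullback_Sets_iff in H; [|exact HF | left; exact Hf].
    apply (pb_joint_inj _ _ _ _ H); [|exact E].
    apply Hf. rewrite !(pb_comm _ _ _ _ H), E. reflexivity.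
  - exact (coalg_vertical_weak_van_Kampen F HF).
Qed.
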